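(* Let $F$ be a countably infinite graph. Then every graph $H$ on vertex set $\mathbb{N}$ having infinitely many vertices of cofinite degree contains a subgraph isomorphic to $F$ whose vertex set is cofinite in $\mathbb{N}$ if and only if $F$ is strongly contracting.
   Context: A vertex $v$ of $H$ has cofinite degree if it is adjacent to all but finitely many vertices of $H$. $F$ is strongly contracting if there is $k\in\mathbb{N}$ such that for every $\ell\in\mathbb{N}$ there is an independent set $A$ in $F$ with $|A|\ge\ell$ and $|N(A)|\le k$, where $N(A)=\bigcup_{v\in A}N(v)$. *)

From Stdlib Require Import List Arith.
Import ListNotations.

Definition is_graph {V : Type} (adj : V -> V -> Prop) : Prop :=
  (forall x y, adj x y -> adj y x) /\ (forall x, ~ adj x x).

Definition finite_set {T : Type} (P : T -> Prop) : Prop :=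
  exists l : list T, forall x, P x -> In x l.

Definition infinite_set {T : Type} (P : T -> Prop) : Prop := ~ finite_set P.

Definition card_ge {T : Type} (P : T -> Prop) (n : nat) : Prop :=
  exists s : list T, NoDup s /\ length s = n /\ forall x, In x s -> P x.

Definition card_le {T : Type} (P : T -> Prop) (n : nat) : Prop :=
  exists s : list T, length s <= n /\ forall x, P x -> In x s.

Definition countably_infinite (V : Type) : Prop :=
  exists e : nat -> V, (forall m n, e m = e n -> m = n) /\ (forall v, exists n, e n = v).

Definition cofinite_degree {V : Type} (adj : V -> V -> Prop) (v : V) : Prop :=
  finite_set (fun u => ~ adj v u).

Definition independent {V : Type} (adj : V -> V -> Prop) (A : V -> Prop) : Prop :=
  forall x y, A x -> A y -> ~ adj x y.

Definition nbhd {V : Type} (adj : V -> V -> Prop) (A : V -> Prop) : V -> Prop :=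
  fun u => exists v, A v /\ adj v u.

Definition strongly_contracting {V : Type} (adj : V -> V -> Prop) : Prop :=
  exists k : nat, forall l : nat, exists A : V -> Prop,
    independent adj A /\ card_ge A l /\ card_le (nbhd adj A) k.

Definition contains_cofinite_copy {V : Type} (F : V -> V -> Prop)
    (H : nat -> nat -> Prop) : Prop :=
  exists f : V -> nat,
    (forall x y, f x = f y -> x = y) /\
    (forall x y, F x y -> H (f x) (f y)) /\
    finite_set (fun n => ~ exists x, f x = n).

(* If F is not strongly contracting, choose L k such that every
   independent set of size L k has more than k neighbours.  The staircase
   graph of L (a clique of even "hubs" 2i, independent odd vertices, and 2i
   adjacent to 2j+1 iff j >= stair L (i+1)) has infinitely many cofinite-degree
   vertices, but in a copy of F with cofinite image a block of L k odd vertices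
   pulls back to an independent set with at most k neighbours.

   The embedding is the limit of finite partial embeddings built
   along an enumeration of the vertices of F.  Between rounds we keep a reserve
   of k+1 unused vertices and a bound M such that every reserve vertex, and
   every mapped vertex with an unmapped neighbour, is adjacent to all numbers
   >= M and to the reserve.  A round chooses a fresh reserve and bound M',
   sends the next vertex and the <= k neighbours of a large contracting set A
   into the old reserve, and sends the rest of A (whose neighbours are now all
   mapped) onto all still unused numbers of the old reserve and of [M, M').
   Hence every number is eventually used, except finitely many below the
   initial bound. *)

From Stdlib Require Import List Arith Lia Classical ClassicalEpsilon.
Import ListNotations.

Lemma finite_bounded (P : nat -> Prop) :
  finite_set P -> exists b, forall n, P n -> n < b.
Proof.
  intros [l Hl]. exists (S (list_max l)). intros n Hn.
  assert (Hmax := proj1 (list_max_le l (list_max l)) (le_n _)).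
  rewrite Forall_forall in Hmax. specialize (Hmax n (Hl n Hn)). lia.
Qed.

Lemma infinite_avoids {T : Type} (P : T -> Prop) (l : list T) :
  infinite_set P -> exists c, P c /\ ~ In c l.
Proof.
  intros Hinf. apply NNPP; intro Hno. apply Hinf. exists l. intros x Hx.
  apply NNPP; intro Hx'. apply Hno. eauto.
Qed.

Lemma card_ge_preimage {V : Type} (f : V -> nat) (ns : list nat) :
  NoDup ns -> (forall n, In n ns -> exists x, f x = n) ->
  card_ge (fun x => In (f x) ns) (length ns).
Proof.
  induction ns as [|n ns IH]; intros Hnd Hsurj.
  - exists []. repeat split; [constructor | intros x []].
  - inversion Hnd as [|? ? Hn Hnd']; subst.
    destruct (Hsurj n (or_introl eq_refl)) as [x Hx].
    destruct IH as (s & Hs1 & Hs2 & Hs3); [exact Hnd' | intros; apply Hsurj; now right |].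
    exists (x :: s). split; [|split; [simpl; lia|]].
    + constructor; [|exact Hs1]. intros Hin. apply Hn. rewrite <- Hx. exact (Hs3 x Hin).
    + intros y [<-|Hy]; [left; now symmetry | right; exact (Hs3 y Hy)].
Qed.

Lemma card_le_preimage {V : Type} (f : V -> nat) (ns : list nat) :
  (forall x y, f x = f y -> x = y) -> card_le (fun x => In (f x) ns) (length ns).
Proof.
  intros finj. induction ns as [|n ns (s & Hs1 & Hs2)].
  - exists []. split; [simpl; lia | intros x []].
  - destruct (classic (exists x, f x = n)) as [[x Hx]|Hno].
    + exists (x :: s). split; [simpl; lia|].
      intros y [Hy|Hy]; [left; apply finj; congruence | right; exact (Hs2 y Hy)].
    + exists s. split; [simpl; lia|].
      intros y [Hy|Hy]; [exfalso; eauto | exact (Hs2 y Hy)].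
Qed.

Definition holds (P : Prop) : bool :=
  if excluded_middle_informative P then true else false.

Lemma holds_spec (P : Prop) : holds P = true <-> P.
Proof.
  unfold holds. destruct (excluded_middle_informative P); split; congruence || tauto.
Qed.

Lemma pairs_functional {A B : Type} (l : list (A * B)) x a b :
  NoDup (map fst l) -> In (x, a) l -> In (x, b) l -> a = b.
Proof.
  induction l as [|[y c] l IH]; simpl; intros Hnd Ha Hb; [contradiction|].
  inversion Hnd as [|? ? Hy Hnd']; subst.
  destruct Ha as [Ha|Ha], Hb as [Hb|Hb]; try congruence; auto;
    exfalso; apply Hy; [injection Ha | injection Hb]; intros; subst;
    [apply (in_map fst) in Hb | apply (in_map fst) in Ha]; assumption.
Qed.

Lemma pairs_injective {A B : Type} (l : list (A * B)) x y a :
  NoDup (map snd l) -> In (x, a) l -> In (y, a) l -> x = y.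
Proof.
  intros Hnd Hx Hy.
  apply (pairs_functional (map (fun p => (snd p, fst p)) l) a).
  - now rewrite map_map.
  - apply (in_map (fun p => (snd p, fst p)) l (x, a)). exact Hx.
  - apply (in_map (fun p => (snd p, fst p)) l (y, a)). exact Hy.
Qed.

Lemma combine_NoDup {A B : Type} (l1 : list A) (l2 : list B) :
  NoDup l1 -> NoDup l2 ->
  NoDup (map fst (combine l1 l2)) /\ NoDup (map snd (combine l1 l2)).
Proof.
  revert l2. induction l1 as [|a l1 IH]; intros [|b l2] Hnd1 Hnd2;
    simpl; try solve [split; constructor].
  inversion Hnd1 as [|? ? Ha Hnd1']; inversion Hnd2 as [|? ? Hb Hnd2']; subst.
  destruct (IH l2 Hnd1' Hnd2') as [IH1 IH2]. simpl. split; constructor; auto.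
  - intros Hin. apply in_map_iff in Hin as [[x y] [<- Hxy]].
    exact (Ha (in_combine_l _ _ _ _ Hxy)).
  - intros Hin. apply in_map_iff in Hin as [[x y] [<- Hxy]].
    exact (Hb (in_combine_r _ _ _ _ Hxy)).
Qed.

Lemma map_fst_combine_le {A B : Type} (l1 : list A) (l2 : list B) :
  length l1 <= length l2 -> map fst (combine l1 l2) = l1.
Proof.
  revert l2; induction l1 as [|a l1 IH]; intros [|b l2]; simpl; intros Hle;
    [reflexivity | reflexivity | lia | f_equal; apply IH; lia].
Qed.

Lemma map_snd_combine_le {A B : Type} (l1 : list A) (l2 : list B) :
  length l2 <= length l1 -> map snd (combine l1 l2) = l2.
Proof.
  revert l2; induction l1 as [|a l1 IH]; intros [|b l2]; simpl; intros Hle;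
    [reflexivity | lia | reflexivity | f_equal; apply IH; lia].
Qed.

Lemma filter_length_lower {A : Type} (p : A -> bool) (s d : list A) :
  NoDup s -> (forall x, In x s -> p x = false -> In x d) ->
  length s <= length (filter p s) + length d.
Proof.
  intros Hnd Hrej. rewrite <- (filter_length p s).
  enough (length (filter (fun x => negb (p x)) s) <= length d) by lia.
  apply NoDup_incl_length; [now apply NoDup_filter|].
  intros x Hx. apply filter_In in Hx as [Hx Hpx]. apply Hrej; [exact Hx|].
  now destruct (p x).
Qed.

Lemma dependent_choice {St : Type} (P : St -> Prop) (R : nat -> St -> St -> Prop) :
  (exists s0, P s0) -> (forall i s, P s -> exists s', P s' /\ R i s s') ->
  exists chain : nat -> St, forall t, P (chain t) /\ R t (chain t) (chain (S t)).
Proof.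
  intros [s0 Hs0] Hstep.
  destruct (choice (fun (p : nat * St) s' => P (snd p) -> P s' /\ R (fst p) (snd p) s'))
    as [g Hg].
  { intros [i s]. destruct (classic (P s)) as [Hs|Hs].
    - destruct (Hstep i s Hs) as [s' Hs']. exists s'. intros _. exact Hs'.
    - exists s. intro. contradiction. }
  set (chain := fix chain t := match t with 0 => s0 | S t' => g (t', chain t') end).
  assert (HP : forall t, P (chain t)).
  { induction t; [exact Hs0 | exact (proj1 (Hg (t, chain t) IHt))]. }
  exists chain. intro t. split; [apply HP | exact (proj2 (Hg (t, chain t) (HP t)))].
Qed.

Lemma chain_limit {V : Type} (ms : nat -> list (V * nat)) :
  (forall t, NoDup (map fst (ms t)) /\ NoDup (map snd (ms t))) ->
  (forall t t', t <= t' -> incl (ms t) (ms t')) ->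
  (forall x, exists t, In x (map fst (ms t))) ->
  exists f : V -> nat, (forall x y, f x = f y -> x = y) /\
    (forall x, exists t, In (x, f x) (ms t)) /\
    (forall x n t, In (x, n) (ms t) -> f x = n).
Proof.
  intros Hnd Hmono Htot.
  destruct (choice (fun x n => exists t, In (x, n) (ms t))) as [f Hf].
  { intro x. destruct (Htot x) as [t Ht]. apply in_map_iff in Ht as [[x' n] [Hx Hxn]].
    simpl in Hx; subst x'. eauto. }
  assert (Hjoin : forall t1 t2 p1 p2, In p1 (ms t1) -> In p2 (ms t2) ->
                    In p1 (ms (max t1 t2)) /\ In p2 (ms (max t1 t2))).
  { intros t1 t2 p1 p2 H1 H2. split; [apply (Hmono t1) | apply (Hmono t2)]; auto; lia. }
  assert (Hval : forall x n t, In (x, n) (ms t) -> f x = n).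
  { intros x n t Hxn. destruct (Hf x) as [t' Ht']. destruct (Hjoin _ _ _ _ Ht' Hxn) as [H1 H2].
    exact (pairs_functional _ x _ _ (proj1 (Hnd _)) H1 H2). }
  exists f. split; [|split; [exact Hf | exact Hval]].
  intros x y Hxy. destruct (Hf x) as [t1 H1], (Hf y) as [t2 H2].
  destruct (Hjoin _ _ _ _ H1 H2) as [H1' H2']. rewrite Hxy in H1'.
  exact (pairs_injective _ x y _ (proj2 (Hnd _)) H1' H2').
Qed.

Fixpoint stair (L : nat -> nat) (j : nat) : nat :=
  match j with 0 => 0 | S j' => stair L j' + S (L j') end.

Lemma stair_ge (L : nat -> nat) (j : nat) : j <= stair L j.
Proof. induction j; simpl; lia. Qed.

Lemma stair_mono (L : nat -> nat) (i j : nat) : i <= j -> stair L i <= stair L j.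
Proof. induction 1; simpl; lia. Qed.

(* The staircase graph: the even vertices [2i] form a clique, the odd vertices
   [2j+1] an independent set, and [2i] sees [2j+1] exactly when
   [stair L (i+1) <= j].  Hence [2i] has cofinite degree, while the odd block
   [2m+1], [stair L k <= m < stair L k + L k] only sees the [k] hubs [2j], [j < k]. *)
Definition staircase (L : nat -> nat) (a b : nat) : Prop :=
  (exists i j, a = 2*i /\ b = 2*j /\ i <> j) \/
  (exists i j, a = 2*i /\ b = 2*j+1 /\ stair L (S i) <= j) \/
  (exists i j, a = 2*i+1 /\ b = 2*j /\ stair L (S j) <= i).

Lemma staircase_is_graph (L : nat -> nat) : is_graph (staircase L).
Proof.
  split.
  - intros x y [(i&j&?&?&?)|[(i&j&?&?&?)|(i&j&?&?&?)]].
    + left; exists j, i; repeat split; auto.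
    + right; right; exists j, i; repeat split; auto.
    + right; left; exists j, i; repeat split; auto.
  - intros x [(i&j&?&?&?)|[(i&j&?&?&?)|(i&j&?&?&?)]]; lia.
Qed.

Lemma staircase_hub_cofinite (L : nat -> nat) (i : nat) :
  cofinite_degree (staircase L) (2*i).
Proof.
  exists (seq 0 (2 * stair L (S i) + 2*i + 2)). intros u Hu. apply in_seq.
  split; [lia|]. apply NNPP; intro Hlarge. apply Hu.
  destruct (Nat.Even_or_Odd u) as [[j Hj]|[j Hj]].
  - left. exists i, j. repeat split; lia.
  - right; left. exists i, j. repeat split; lia.
Qed.

Lemma staircase_infinitely_many_hubs (L : nat -> nat) :
  infinite_set (cofinite_degree (staircase L)).
Proof.
  intros Hfin. destruct (finite_bounded _ Hfin) as [b Hb].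
  specialize (Hb (2*b) (staircase_hub_cofinite L b)). lia.
Qed.

(* A copy of [F] in [staircase L] with cofinite image yields, for [k] beyond the
   missing vertices, an independent set of size [L k] with at most [k] neighbours:
   the preimage of the odd block at height [stair L k]. *)
Lemma staircase_copy_contracts {V : Type} (F : V -> V -> Prop) (L : nat -> nat)
    (f : V -> nat) :
  (forall x y, f x = f y -> x = y) ->
  (forall x y, F x y -> staircase L (f x) (f y)) ->
  finite_set (fun n => ~ exists x, f x = n) ->
  exists k A, independent F A /\ card_ge A (L k) /\ card_le (nbhd F A) k.
Proof.
  intros finj fhom Hmiss. destruct (finite_bounded _ Hmiss) as [k Hk].
  set (t := stair L k). assert (Hkt : k <= t) by apply stair_ge.
  set (odds := map (fun m => 2*m+1) (seq t (L k))).
  assert (Hodds : forall n, In n odds <-> exists m, t <= m < t + L k /\ n = 2*m+1).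
  { intro n. unfold odds. rewrite in_map_iff.
    split; intros [m [Hm1 Hm2]]; exists m; rewrite in_seq in *; split; lia. }
  exists k, (fun x => In (f x) odds). split; [|split].
  - intros x y Hx Hy Hxy. apply Hodds in Hx as (m&_&Hm), Hy as (m'&_&Hm').
    specialize (fhom x y Hxy). rewrite Hm, Hm' in fhom.
    destruct fhom as [(i&j&?&?&?)|[(i&j&?&?&?)|(i&j&?&?&?)]]; lia.
  - replace (L k) with (length odds) by (unfold odds; now rewrite length_map, length_seq).
    apply card_ge_preimage.
    + apply (NoDup_map_NoDup_ForallPairs); [intros a b _ _ Hab; lia | apply seq_NoDup].
    + intros n Hn. apply NNPP; intro Hno. apply Hodds in Hn as (m&Hm&->).
      specialize (Hk _ Hno). lia.
  - destruct (card_le_preimage f (map (fun j => 2*j) (seq 0 k)) finj) as (s & Hs1 & Hs2).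
    rewrite length_map, length_seq in Hs1. exists s. split; [exact Hs1|].
    intros u [x [Hx Hxu]]. apply Hs2. apply Hodds in Hx as (m&Hm&Hfx).
    specialize (fhom x u Hxu). rewrite Hfx in fhom.
    destruct fhom as [(i&j&?&?&?)|[(i&j&?&?&?)|(i&j&Hi&Hj&Hle)]]; try lia.
    apply in_map_iff. exists j. split; [congruence|]. apply in_seq. split; [lia|].
    apply NNPP; intro Hjk. assert (stair L (S k) <= stair L (S j)) by (apply stair_mono; lia).
    simpl in *. lia.
Qed.

Lemma not_contracting_threshold {V : Type} (F : V -> V -> Prop) :
  ~ strongly_contracting F ->
  exists L : nat -> nat, forall k A,
    independent F A -> card_ge A (L k) -> ~ card_le (nbhd F A) k.
Proof.
  intros Hnot. apply (choice (fun k l => forall A,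
    independent F A -> card_ge A l -> ~ card_le (nbhd F A) k)).
  intro k. apply NNPP; intro Hno. apply Hnot. exists k. intro l.
  apply NNPP; intro Hl. apply Hno. exists l. intros A HA HAl HN. apply Hl. eauto.
Qed.

Lemma necessity {V : Type} (F : V -> V -> Prop) :
  (forall H : nat -> nat -> Prop,
      is_graph H -> infinite_set (cofinite_degree H) -> contains_cofinite_copy F H) ->
  strongly_contracting F.
Proof.
  intros Huniv. apply NNPP; intro Hnot.
  destruct (not_contracting_threshold F Hnot) as [L HL].
  destruct (Huniv (staircase L) (staircase_is_graph L) (staircase_infinitely_many_hubs L))
    as (f & finj & fhom & Hmiss).
  destruct (staircase_copy_contracts F L f finj fhom Hmiss) as (k & A & HA & Hge & Hle).
  exact (HL k A HA Hge Hle).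
Qed.

Definition zone (M : nat) (Q : list nat) (n : nat) : Prop := M <= n \/ In n Q.

Lemma pending_targets (used Q Q' : list nat) (M M' : nat) :
  NoDup Q -> exists T, NoDup T /\ length T <= length Q + M' /\
    forall n, In n T <->
      ~ In n used /\ (In n Q \/ (M <= n < M' /\ ~ In n Q /\ ~ In n Q')).
Proof.
  intros HQ.
  exists (filter (fun n => holds (~ In n used)) Q ++
          filter (fun n => holds (~ In n used /\ ~ In n Q /\ ~ In n Q')) (seq M (M' - M))).
  split; [|split].
  - apply NoDup_app; try (apply NoDup_filter; auto using seq_NoDup).
    intros n Hn Hn'. apply filter_In in Hn as [Hn _], Hn' as [_ Hn'].
    rewrite holds_spec in Hn'. tauto.
  - rewrite length_app. pose proof (filter_length_le (fun n => holds (~ In n used)) Q).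
    pose proof (filter_length_le (fun n => holds (~ In n used /\ ~ In n Q /\ ~ In n Q'))
      (seq M (M' - M))). rewrite length_seq in *. lia.
  - intro n. rewrite in_app_iff, !filter_In, !holds_spec, in_seq. split.
    + intros [[? ?]|[? ?]]; [tauto | split; [tauto | right; repeat split; tauto || lia]].
    + intros [? [?|(?&?&?)]]; [left; tauto | right; repeat split; tauto || lia].
Qed.

Section Sufficiency.

Variables (V : Type) (F : V -> V -> Prop) (H : nat -> nat -> Prop).
Hypothesis F_graph : is_graph F.
Hypothesis H_graph : is_graph H.

Definition universal_on (Z : nat -> Prop) (u : nat) : Prop :=
  forall n, Z n -> n <> u -> H u n.

Definition frontier (m : list (V * nat)) (x : V) : Prop :=
  exists y, F x y /\ ~ In y (map fst m).

(* The invariant of a partial embedding [m] (a finite injective homomorphism,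
   given by its graph), relative to a zone [Z] of free target vertices and a
   reserve [Q]: frontier vertices, and unused reserve vertices, are adjacent to
   the whole zone, so any free vertex of [Z] may later receive a neighbour. *)
Record embedding_inv (m : list (V * nat)) (Q : list nat) (Z : nat -> Prop) : Prop := {
  inv_dom : NoDup (map fst m);
  inv_img : NoDup (map snd m);
  inv_hom : forall x y nx ny, In (x, nx) m -> In (y, ny) m -> F x y -> H nx ny;
  inv_frontier : forall x nx, In (x, nx) m -> frontier m x -> universal_on Z nx;
  inv_reserve : forall q, In q Q -> ~ In q (map snd m) -> Z q /\ universal_on Z q }.
Arguments inv_dom {m Q Z}.
Arguments inv_img {m Q Z}.
Arguments inv_hom {m Q Z}.
Arguments inv_frontier {m Q Z}.
Arguments inv_reserve {m Q Z}.

Lemma inv_extend_one m Q Z x n :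
  embedding_inv m Q Z -> ~ In x (map fst m) -> ~ In n (map snd m) -> Z n ->
  (In n Q \/ forall y, F x y -> In y (map fst m)) ->
  embedding_inv ((x, n) :: m) Q Z.
Proof.
  intros Hinv Hx Hn HZ Hcase. destruct F_graph as [Fsym Firr], H_graph as [Hsym _].
  (* a mapped neighbour of the unmapped [x] is on the frontier, hence sees [n] *)
  assert (Hnew : forall y ny, In (y, ny) m -> F x y -> H n ny).
  { intros y ny Hy Fxy. apply Hsym. apply (inv_frontier Hinv y ny Hy); [|exact HZ|].
    - exists x. split; auto.
    - intros ->. apply Hn. exact (in_map snd _ _ Hy). }
  constructor.
  - constructor; [exact Hx | exact (inv_dom Hinv)].
  - constructor; [exact Hn | exact (inv_img Hinv)].
  - intros x' y' nx ny [Ex|Hx'] [Ey|Hy'] Fxy.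
    + injection Ex; injection Ey; intros; subst. exfalso; exact (Firr _ Fxy).
    + injection Ex; intros; subst. eauto.
    + injection Ey; intros; subst. apply Hsym. eauto.
    + exact (inv_hom Hinv _ _ _ _ Hx' Hy' Fxy).
  - intros z nz [Ez|Hz] [y [Fzy Hy]].
    + injection Ez; intros; subst z nz. destruct Hcase as [HQ|Hnbrs].
      * exact (proj2 (inv_reserve Hinv n HQ Hn)).
      * exfalso. apply Hy. right. exact (Hnbrs y Fzy).
    + apply (inv_frontier Hinv z nz Hz). exists y. split; [exact Fzy|].
      intro. apply Hy. now right.
  - intros q Hq Hq'. apply (inv_reserve Hinv q Hq). intro. apply Hq'. now right.
Qed.

Lemma inv_extend m Q Z (ps : list (V * nat)) :
  embedding_inv m Q Z ->
  NoDup (map fst (ps ++ m)) -> NoDup (map snd (ps ++ m)) ->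
  (forall x n, In (x, n) ps ->
     Z n /\ (In n Q \/ forall y, F x y -> In y (map fst m))) ->
  embedding_inv (ps ++ m) Q Z.
Proof.
  intros Hinv. induction ps as [|[x n] ps IH]; intros Hd Hi Hok; [exact Hinv|].
  inversion Hd as [|? ? Hx Hd']; inversion Hi as [|? ? Hn Hi']; subst.
  destruct (Hok x n (or_introl eq_refl)) as [HZ Hcase].
  apply inv_extend_one; auto.
  - apply IH; auto. intros x' n' Hxn. apply Hok. now right.
  - destruct Hcase as [HQ|Hnbrs]; [now left | right].
    intros y Fxy. rewrite map_app, in_app_iff. right. exact (Hnbrs y Fxy).
Qed.

Lemma inv_match m Q Z (xs : list V) (ns : list nat) :
  embedding_inv m Q Z -> NoDup xs -> NoDup ns ->
  (forall x, In x xs -> ~ In x (map fst m)) ->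
  (forall n, In n ns -> ~ In n (map snd m)) ->
  (forall x n, In x xs -> In n ns ->
     Z n /\ (In n Q \/ forall y, F x y -> In y (map fst m))) ->
  embedding_inv (combine xs ns ++ m) Q Z.
Proof.
  intros Hinv Hxs Hns Hfx Hfn Hok.
  destruct (combine_NoDup xs ns Hxs Hns) as [Hnd1 Hnd2].
  pose proof (inv_dom Hinv) as Hdom. pose proof (inv_img Hinv) as Himg.
  apply inv_extend; [exact Hinv | rewrite map_app .. |].
  - apply NoDup_app; auto. intros a Ha. apply in_map_iff in Ha as [[x n] [<- Hxn]].
    exact (Hfx x (in_combine_l _ _ _ _ Hxn)).
  - apply NoDup_app; auto. intros a Ha. apply in_map_iff in Ha as [[x n] [<- Hxn]].
    exact (Hfn n (in_combine_r _ _ _ _ Hxn)).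
  - intros x n Hxn. exact (Hok x n (in_combine_l _ _ _ _ Hxn) (in_combine_r _ _ _ _ Hxn)).
Qed.

Lemma inv_rezone m Q Z Q' Z' :
  embedding_inv m Q Z ->
  (forall x nx, In (x, nx) m -> frontier m x -> universal_on Z' nx) ->
  (forall q, In q Q' -> ~ In q (map snd m) -> Z' q /\ universal_on Z' q) ->
  embedding_inv m Q' Z'.
Proof.
  intros Hinv Hfr Hres.
  exact {| inv_dom := inv_dom Hinv; inv_img := inv_img Hinv; inv_hom := inv_hom Hinv;
           inv_frontier := Hfr; inv_reserve := Hres |}.
Qed.

Lemma universal_on_mono (Z Z' : nat -> Prop) u :
  (forall n, Z' n -> Z n) -> universal_on Z u -> universal_on Z' u.
Proof. intros HZ Hu n Hn. exact (Hu n (HZ n Hn)). Qed.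

Lemma universal_cofinite (Z : nat -> Prop) M u :
  (forall n, M <= n -> Z n) -> universal_on Z u -> cofinite_degree H u.
Proof.
  intros HZ Hu. exists (u :: seq 0 M). intros n Hn.
  destruct (Nat.eq_dec n u) as [->|Hne]; [now left | right].
  apply in_seq. split; [lia|]. apply NNPP; intro Hge. apply Hn, Hu; [apply HZ|]; lia.
Qed.

Lemma finite_nonneighbours (Cs : list nat) :
  (forall c, In c Cs -> cofinite_degree H c) ->
  finite_set (fun u => exists c, In c Cs /\ ~ H c u).
Proof.
  induction Cs as [|c Cs IH]; intros HCs.
  - exists []. intros u (c & [] & _).
  - destruct IH as [B HB]; [intros; apply HCs; now right|].
    destruct (HCs c (or_introl eq_refl)) as [B1 HB1].
    exists (B1 ++ B). intros u (c' & [<-|Hc'] & Hu); apply in_app_iff;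
      [left; exact (HB1 u Hu) | right; apply HB; eauto].
Qed.

Lemma choose_clique (avoid Cs : list nat) (r : nat) :
  infinite_set (cofinite_degree H) -> (forall c, In c Cs -> cofinite_degree H c) ->
  exists Q, NoDup Q /\ length Q = r /\
    (forall q, In q Q -> cofinite_degree H q /\ ~ In q avoid /\ forall c, In c Cs -> H q c) /\
    (forall q q', In q Q -> In q' Q -> q <> q' -> H q q').
Proof.
  intros Hinf HCs. destruct H_graph as [Hsym _].
  induction r as [|r (Q & Q1 & Q2 & Q3 & Q4)].
  - exists []. split; [constructor|]. split; [reflexivity|].
    split; [intros q [] | intros q q' []].
  - destruct (finite_nonneighbours (Cs ++ Q)) as [B HB].
    { intros c Hc. apply in_app_iff in Hc as [Hc|Hc]; [exact (HCs c Hc) | apply Q3, Hc]. }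
    destruct (infinite_avoids _ (avoid ++ B ++ Q) Hinf) as [c [Hc Hc']].
    rewrite !in_app_iff in Hc'.
    assert (Hadj : forall c', In c' (Cs ++ Q) -> H c c').
    { intros c' Hin. apply Hsym. apply NNPP; intro Hn. apply Hc'. right; left. apply HB. eauto. }
    exists (c :: Q). split; [constructor; tauto|]. split; [simpl; lia|]. split.
    + intros q [<-|Hq]; [|apply Q3, Hq]. split; [exact Hc|]. split; [tauto|].
      intros c' Hc''. apply Hadj, in_app_iff; auto.
    + intros q q' [<-|Hq] [<-|Hq'] Hne; try congruence.
      * apply Hadj, in_app_iff; auto.
      * apply Hsym, Hadj, in_app_iff; auto.
      * auto.
Qed.

Lemma choose_reserve (avoid Cs : list nat) (r : nat) :
  infinite_set (cofinite_degree H) -> (forall c, In c Cs -> cofinite_degree H c) ->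
  exists Q b, NoDup Q /\ length Q = r /\
    (forall q, In q Q -> ~ In q avoid /\ forall c, In c Cs -> H q c) /\
    (forall b', b <= b' -> forall q, In q Q -> universal_on (zone b' Q) q).
Proof.
  intros Hinf HCs.
  destruct (choose_clique avoid Cs r Hinf HCs) as (Q & Q1 & Q2 & Q3 & Q4).
  destruct (finite_bounded _ (finite_nonneighbours Q (fun q Hq => proj1 (Q3 q Hq))))
    as [b Hb].
  exists Q, b. split; [exact Q1|]. split; [exact Q2|]. split.
  - intros q Hq. exact (proj2 (Q3 q Hq)).
  - intros b' Hb' q Hq n [Hn|Hn] Hne.
    + apply NNPP; intro Hno. specialize (Hb n (ex_intro _ q (conj Hq Hno))). lia.
    + apply Q4; auto.
Qed.

Record state := { st_map : list (V * nat); st_reserve : list nat; st_bound : nat }.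

Variable k : nat.
Hypothesis contracting :
  forall l, exists A, independent F A /\ card_ge A l /\ card_le (nbhd F A) k.
Hypothesis many_hubs : infinite_set (cofinite_degree H).

Record good (M0 : nat) (st : state) : Prop := {
  good_inv : embedding_inv (st_map st) (st_reserve st) (zone (st_bound st) (st_reserve st));
  good_reserve_nodup : NoDup (st_reserve st);
  good_reserve_size : length (st_reserve st) = S k;
  good_reserve_fresh : forall q, In q (st_reserve st) -> ~ In q (map snd (st_map st));
  good_covered : forall n, n < st_bound st ->
    In n (map snd (st_map st)) \/ n < M0 \/ In n (st_reserve st) }.

Definition advance (v : V) (st st' : state) : Prop :=
  incl (st_map st) (st_map st') /\ st_bound st < st_bound st' /\
  In v (map fst (st_map st')) /\ incl (st_reserve st) (map snd (st_map st')).

Lemma good_initial : exists M0 st, good M0 st.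
Proof.
  destruct (choose_reserve [] [] (S k) many_hubs (fun c Hc => match Hc with end))
    as (Q & b & Q1 & Q2 & _ & Q4).
  exists b, {| st_map := []; st_reserve := Q; st_bound := b |}.
  constructor; simpl; [| exact Q1 | exact Q2 | tauto | intros n Hn; now right; left].
  constructor; simpl; [constructor | constructor | tauto | tauto |].
  intros q Hq _. split; [now right | exact (Q4 b (le_n b) q Hq)].
Qed.

Lemma fresh_reserve M0 st : good M0 st ->
  exists Q' M', st_bound st < M' /\ NoDup Q' /\ length Q' = S k /\
    (forall q, In q Q' -> ~ In q (map snd (st_map st)) /\ ~ In q (st_reserve st)) /\
    (forall q, In q Q' -> universal_on (zone M' Q') q) /\
    embedding_inv (st_map st) (st_reserve st)
      (fun n => zone (st_bound st) (st_reserve st) n \/ In n Q').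
Proof.
  destruct st as [m Q M]. intros [Hinv _ _ HQfresh _]; simpl in *.
  destruct H_graph as [Hsym _].
  set (Cs := Q ++ filter (fun c => holds (cofinite_degree H c)) (map snd m)).
  destruct (choose_reserve (map snd m ++ Q) Cs (S k)) as (Q' & b & Q1 & Q2 & Q3 & Q4).
  { exact many_hubs. }
  { intros c Hc. apply in_app_iff in Hc as [Hc|Hc].
    - apply (universal_cofinite (zone M Q) M c); [intros n Hn; now left|].
      exact (proj2 (inv_reserve Hinv c Hc (HQfresh c Hc))).
    - apply filter_In in Hc as [_ Hc]. now rewrite holds_spec in Hc. }
  exists Q', (S (M + b)). split; [lia|]. split; [exact Q1|]. split; [exact Q2|]. split.
  { intros q Hq. specialize (Q3 q Hq). rewrite in_app_iff in Q3. tauto. }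
  split; [intros q Hq; apply Q4; [lia | exact Hq]|].
  assert (HCs : forall c n, In c Cs -> In n Q' -> H c n).
  { intros c n Hc Hn. apply Hsym. exact (proj2 (Q3 n Hn) c Hc). }
  apply (inv_rezone _ _ _ _ _ Hinv).
  - intros x nx Hx Hfr n [Hn|Hn] Hne; [exact (inv_frontier Hinv x nx Hx Hfr n Hn Hne)|].
    apply HCs; [|exact Hn]. apply in_app_iff; right. apply filter_In. split.
    + exact (in_map snd _ _ Hx).
    + apply holds_spec, (universal_cofinite (zone M Q) M); [intros n' Hn'; now left|].
      exact (inv_frontier Hinv x nx Hx Hfr).
  - intros q Hq Hq'. destruct (inv_reserve Hinv q Hq Hq') as [HZ Hu]. split; [now left|].
    intros n [Hn|Hn] Hne; [exact (Hu n Hn Hne)|].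
    apply HCs; [apply in_app_iff; now left | exact Hn].
Qed.

Lemma absorb_phase m Q Z (v : V) (nb : list V) :
  embedding_inv m Q Z -> NoDup Q ->
  (forall q, In q Q -> ~ In q (map snd m) /\ Z q) -> S (length nb) <= length Q ->
  exists m1, embedding_inv m1 Q Z /\ incl m m1 /\ incl (v :: nb) (map fst m1) /\
    (forall n, In n (map snd m1) -> In n (map snd m) \/ In n Q) /\
    length m1 <= length m + length Q.
Proof.
  intros Hinv HQ HQfree Hlen.
  set (xs := nodup (fun x y : V => excluded_middle_informative (x = y))
               (filter (fun x => holds (~ In x (map fst m))) (v :: nb))).
  assert (Hxs : forall x, In x xs <-> In x (v :: nb) /\ ~ In x (map fst m)).
  { intro x. unfold xs. rewrite nodup_In, filter_In, holds_spec. tauto. }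
  assert (Hxs_len : length xs <= length Q).
  { enough (length xs <= length (v :: nb)) by (simpl in *; lia).
    apply NoDup_incl_length; [apply NoDup_nodup | intros x Hx; apply Hxs, Hx]. }
  exists (combine xs Q ++ m). split; [|split; [|split; [|split]]].
  - apply inv_match; auto; [apply NoDup_nodup | | |].
    + intros x Hx. apply Hxs, Hx.
    + intros n Hn. apply HQfree, Hn.
    + intros x n _ Hn. split; [apply HQfree, Hn | now left].
  - intros p Hp. apply in_app_iff. now right.
  - intros x Hx. rewrite map_app, in_app_iff, map_fst_combine_le by exact Hxs_len.
    destruct (classic (In x (map fst m))); [now right | left; apply Hxs; auto].
  - intros n Hn. rewrite map_app, in_app_iff in Hn. destruct Hn as [Hn|Hn]; [|now left].
    right. apply in_map_iff in Hn as [[x n'] [<- Hxn]]. exact (in_combine_r _ _ _ _ Hxn).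
  - rewrite length_app, length_combine. lia.
Qed.

Lemma closed_candidates (m1 : list (V * nat)) (s nb : list V) :
  NoDup s -> incl nb (map fst m1) -> (forall x y, In x s -> F x y -> In y nb) ->
  exists C, NoDup C /\ length s <= length C + length m1 /\
    forall x, In x C -> ~ In x (map fst m1) /\ forall y, F x y -> In y (map fst m1).
Proof.
  intros Hs Hnb Hnbrs.
  exists (filter (fun x => holds (~ In x (map fst m1))) s). split; [|split].
  - now apply NoDup_filter.
  - rewrite <- (length_map fst m1). apply filter_length_lower; [exact Hs|].
    intros x _ Hx. apply NNPP. intro Hno. rewrite <- holds_spec in Hno. congruence.
  - intros x Hx. apply filter_In in Hx as [Hx Hfree]. rewrite holds_spec in Hfree.
    split; [exact Hfree|]. intros y Fxy. exact (Hnb y (Hnbrs x y Hx Fxy)).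
Qed.

Lemma fill_phase m Q Z (C : list V) (T : list nat) :
  embedding_inv m Q Z -> NoDup C -> NoDup T ->
  (forall x, In x C -> ~ In x (map fst m) /\ forall y, F x y -> In y (map fst m)) ->
  (forall n, In n T -> ~ In n (map snd m) /\ Z n) -> length T <= length C ->
  exists m2, embedding_inv m2 Q Z /\ incl m m2 /\ incl T (map snd m2) /\
    (forall n, In n (map snd m2) -> In n T \/ In n (map snd m)).
Proof.
  intros Hinv HC HT HCfree HTfree Hlen.
  exists (combine C T ++ m). split; [|split; [|split]].
  - apply inv_match; auto.
    + intros x Hx. apply HCfree, Hx.
    + intros n Hn. apply HTfree, Hn.
    + intros x n Hx Hn. split; [apply HTfree, Hn | right; apply HCfree, Hx].
  - intros p Hp. apply in_app_iff. now right.
  - intros n Hn. rewrite map_app, in_app_iff, map_snd_combine_le by exact Hlen. now left.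
  - intros n Hn. rewrite map_app, in_app_iff, map_snd_combine_le in Hn by exact Hlen. tauto.
Qed.

Lemma round_map m Q Z Q' M M' (v : V) :
  embedding_inv m Q Z -> NoDup Q -> length Q = S k ->
  (forall q, In q Q -> ~ In q (map snd m)) -> (forall n, M <= n \/ In n Q -> Z n) ->
  exists m2, embedding_inv m2 Q Z /\ incl m m2 /\ In v (map fst m2) /\
    incl Q (map snd m2) /\
    (forall n, In n (map snd m2) -> In n (map snd m) \/ In n Q \/ ~ In n Q') /\
    (forall n, M <= n < M' -> In n (map snd m2) \/ In n Q').
Proof.
  intros Hinv HQnd HQlen HQfresh HZ.
  destruct (contracting (length m + S k + S k + M'))
    as (A & _ & (s & Hs_nd & Hs_len & HsA) & (nb & Hnb_len & HnbA)).
  destruct (absorb_phase m Q Z v nb Hinv HQnd) as (m1 & Hinv1 & Hmm1 & Hvnb & Himg1 & Hlen1).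
  { intros q Hq. split; [exact (HQfresh q Hq) | apply HZ; now right]. }
  { lia. }
  destruct (closed_candidates m1 s nb Hs_nd) as (C & HC_nd & HC_len & HC).
  { intros u Hu. apply Hvnb. now right. }
  { intros x y Hx Fxy. apply HnbA. exists x. split; [apply HsA, Hx | exact Fxy]. }
  destruct (pending_targets (map snd m1) Q Q' M M' HQnd) as (T & HT_nd & HT_len & HT).
  destruct (fill_phase m1 Q Z C T Hinv1 HC_nd HT_nd HC) as (m2 & Hinv2 & Hm12 & HTm2 & Himg2).
  { intros n Hn. apply HT in Hn as [Hfree Hn]. split; [exact Hfree|].
    apply HZ. destruct Hn as [Hn|(Hn&_)]; [now right | left; lia]. }
  { lia. }
  assert (Hm12' : incl (map snd m1) (map snd m2)) by (apply incl_map, Hm12).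
  assert (HQused : incl Q (map snd m2)).
  { intros q Hq. destruct (classic (In q (map snd m1))) as [Hq1|Hq1]; [exact (Hm12' q Hq1)|].
    apply HTm2, HT. auto. }
  exists m2. split; [exact Hinv2|]. split; [exact (incl_tran Hmm1 Hm12)|].
  split; [apply (incl_map fst Hm12), Hvnb; now left|]. split; [exact HQused|]. split.
  - intros n Hn. destruct (Himg2 n Hn) as [HnT|Hn1]; [apply HT in HnT; tauto|].
    destruct (Himg1 n Hn1); tauto.
  - intros n Hn. destruct (classic (In n (map snd m1))) as [Hu|Hu]; [left; now apply Hm12'|].
    destruct (classic (In n Q)) as [HuQ|HuQ]; [left; now apply HQused|].
    destruct (classic (In n Q')) as [HuQ'|HuQ']; [now right|].
    left. apply HTm2, HT. split; [exact Hu | right; repeat split; auto; lia].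
Qed.

Lemma switch_reserve M0 m Q M Q' M' :
  embedding_inv m Q (fun n => zone M Q n \/ In n Q') -> M <= M' ->
  NoDup Q' -> length Q' = S k -> (forall q, In q Q' -> ~ In q (map snd m)) ->
  (forall q, In q Q' -> universal_on (zone M' Q') q) ->
  (forall n, n < M' -> In n (map snd m) \/ n < M0 \/ In n Q') ->
  good M0 {| st_map := m; st_reserve := Q'; st_bound := M' |}.
Proof.
  intros Hinv HM Q'nd Q'len Q'fresh Q'univ Hcov. constructor; simpl; auto.
  apply (inv_rezone _ _ _ _ _ Hinv).
  - intros x nx Hx Hfr. apply (universal_on_mono (fun n => zone M Q n \/ In n Q'));
      [|exact (inv_frontier Hinv x nx Hx Hfr)].
    intros n [Hn|Hn]; [left; left; lia | now right].
  - intros q Hq _. split; [now right | exact (Q'univ q Hq)].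
Qed.

Lemma good_step M0 st (v : V) :
  good M0 st -> exists st', good M0 st' /\ advance v st st'.
Proof.
  intros Hg.
  destruct (fresh_reserve M0 st Hg) as (Q' & M' & HM & Q'nd & Q'len & Q'fresh & Q'univ & Hwide).
  destruct st as [m Q M]; destruct Hg as [_ HQnd HQlen HQfresh Hcov]; simpl in *.
  destruct (round_map m Q _ Q' M M' v Hwide HQnd HQlen HQfresh)
    as (m2 & Hinv2 & Hmm2 & Hv & HQused & Himg2 & Hfill).
  { intros n [Hn|Hn]; left; [now left | now right]. }
  exists {| st_map := m2; st_reserve := Q'; st_bound := M' |}. split.
  - apply (switch_reserve M0 m2 Q M); auto; [lia | |].
    + intros q Hq Hq2. destruct (Q'fresh q Hq). destruct (Himg2 q Hq2) as [?|[?|?]]; tauto.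
    + intros n Hn. destruct (Nat.lt_ge_cases n M) as [Hlt|Hge]; [|destruct (Hfill n); auto].
      destruct (Hcov n Hlt) as [Hu|[Hu|Hu]]; [left; now apply (incl_map snd Hmm2) | auto |].
      left. now apply HQused.
  - repeat split; simpl; assumption.
Qed.

End Sufficiency.

Arguments st_map {V}.
Arguments st_bound {V}.
Arguments advance {V}.
Arguments good_inv {V F H k M0 st}.
Arguments good_covered {V F H k M0 st}.
Arguments inv_dom {V F H m Q Z}.
Arguments inv_img {V F H m Q Z}.
Arguments inv_hom {V F H m Q Z}.

(* Sufficiency: iterate the rounds along an enumeration of [V]; the limit map is
   a homomorphism, and a number it misses is below [M0]. *)
Theorem sufficiency {V : Type} (F : V -> V -> Prop) :
  is_graph F -> countably_infinite V -> strongly_contracting F ->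
  forall H, is_graph H -> infinite_set (cofinite_degree H) -> contains_cofinite_copy F H.
Proof.
  intros HF [e [_ esurj]] [k Hk] H HH Hhubs.
  destruct (good_initial V F H HH k Hhubs) as [M0 Hinit].
  destruct (dependent_choice (good V F H k M0) (fun i => advance (e i)) Hinit
    (fun i st Hst => good_step V F H HF HH k Hk Hhubs M0 st (e i) Hst)) as [st Hst].
  set (ms := fun t => st_map (st t)).
  assert (Hmono : forall t t', t <= t' -> incl (ms t) (ms t')).
  { induction 1; [intros p Hp; exact Hp | exact (incl_tran IHle (proj1 (proj2 (Hst m))))]. }
  destruct (chain_limit ms) as (f & finj & Hf & Hval).
  - intro t. pose proof (good_inv (proj1 (Hst t))) as Hinv.
    exact (conj (inv_dom Hinv) (inv_img Hinv)).
  - exact Hmono.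
  - intro x. destruct (esurj x) as [i <-]. exists (S i).
    exact (proj1 (proj2 (proj2 (proj2 (Hst i))))).
  - exists f. split; [exact finj|]. split.
    + intros x y Fxy. destruct (Hf x) as [t1 H1], (Hf y) as [t2 H2].
      apply (inv_hom (good_inv (proj1 (Hst (max t1 t2)))) x y); [| |exact Fxy].
      * apply (Hmono t1); [lia | exact H1].
      * apply (Hmono t2); [lia | exact H2].
    + exists (seq 0 M0). intros n Hn. apply in_seq. split; [lia|].
      assert (Hunused : forall t, ~ In n (map snd (ms t))).
      { intros t Hu. apply in_map_iff in Hu as [[x n'] [Hx Hxn]]. simpl in Hx; subst n'.
        apply Hn. exists x. exact (Hval _ _ _ Hxn). }
      assert (Hbound : forall t, t <= st_bound (st t)).
      { induction t; [lia | destruct (Hst t) as [_ (_&Hlt&_)]; lia]. }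
      destruct (Hst (S n)) as [Hg (_&_&_&Hres)].
      destruct (good_covered Hg n) as [Hu|[Hu|Hu]];
        [specialize (Hbound (S n)); lia | | exact Hu |].
      * exfalso. exact (Hunused (S n) Hu).
      * exfalso. exact (Hunused (S (S n)) (Hres n Hu)).
Qed.

Theorem mainTheorem15 (V : Type) (F : V -> V -> Prop) :
  is_graph F -> countably_infinite V ->
  ((forall H : nat -> nat -> Prop,
      is_graph H -> infinite_set (cofinite_degree H) ->
      contains_cofinite_copy F H)
   <-> strongly_contracting F).
Proof.
  intros HF HV. split.
  - apply necessity.
  - intros Hsc H HH Hhubs. exact (sufficiency F HF HV Hsc H HH Hhubs).
Qed.
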